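(* Let $\mathbf{L}\in\{\mathbf{K}_D,\mathbf{KD}_D,\mathbf{KT}_D\}$. For every formula $A$: $\mathsf{H}(\mathbf{L})\vdash A$ if and only if $\mathsf{G}(\mathbf{L})\vdash\;\Rightarrow A$.
   Context: Language: fix a finite nonempty set $\mathsf{Agt}$ of agents and a countable set $\mathsf{Prop}$ of propositional variables; $\mathsf{Grp}$ is the set of nonempty subsets of $\mathsf{Agt}$. Formulas: $\alpha::=p\mid\bot\mid\alpha\wedge\alpha\mid\alpha\vee\alpha\mid\alpha\rightarrow\alpha\mid\neg\alpha\mid D_G\alpha$ ($p\in\mathsf{Prop}$, $G\in\mathsf{Grp}$). Outmost-boxed formula: one of the form $D_G\gamma$. Hilbert systems: $\mathsf{H}(\mathbf{K}_D)$ has all instances of propositional tautologies, $D_G(\alpha\rightarrow\beta)\rightarrow(D_G\alpha\rightarrow D_G\beta)$, $D_G\alpha\rightarrow D_H\alpha$ for $G\subseteq H$, modus ponens, and necessitation (from $\alpha$ infer $D_G\alpha$). $\mathsf{H}(\mathbf{KD}_D)$ adds $\neg D_{\{a\}}\bot$ for each $a\in\mathsf{Agt}$; $\mathsf{H}(\mathbf{KT}_D)$ adds $D_G\alpha\rightarrow\alpha$. Sequent calculi (sequents $\Gamma\Rightarrow\Delta$ are pairs of finite multisets; derivable = root of a finite tree built from initial sequents by rules): $\mathsf{G}(\mathbf{K}_D)$ has initial sequents $\Gamma,p\Rightarrow p,\Delta$ and $\bot,\Gamma\Rightarrow\Delta$; rules $(R\wedge)$ from $\Gamma\Rightarrow\Delta,\alpha_1$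 and $\Gamma\Rightarrow\Delta,\alpha_2$ infer $\Gamma\Rightarrow\Delta,\alpha_1\wedge\alpha_2$; $(L\wedge)$ from $\alpha_1,\alpha_2,\Gamma\Rightarrow\Delta$ infer $\alpha_1\wedge\alpha_2,\Gamma\Rightarrow\Delta$; $(R\vee)$ from $\Gamma\Rightarrow\Delta,\alpha_1,\alpha_2$ infer $\Gamma\Rightarrow\Delta,\alpha_1\vee\alpha_2$; $(L\vee)$ from $\alpha_1,\Gamma\Rightarrow\Delta$ and $\alpha_2,\Gamma\Rightarrow\Delta$ infer $\alpha_1\vee\alpha_2,\Gamma\Rightarrow\Delta$; $(R\rightarrow)$ from $\alpha_1,\Gamma\Rightarrow\Delta,\alpha_2$ infer $\Gamma\Rightarrow\Delta,\alpha_1\rightarrow\alpha_2$; $(L\rightarrow)$ from $\Gamma\Rightarrow\Delta,\alpha_1$ and $\alpha_2,\Gamma\Rightarrow\Delta$ infer $\alpha_1\rightarrow\alpha_2,\Gamma\Rightarrow\Delta$; $(R\neg)$ from $\alpha,\Gamma\Rightarrow\Delta$ infer $\Gamma\Rightarrow\Delta,\neg\alpha$; $(L\neg)$ from $\Gamma\Rightarrow\Delta,\alpha$ infer $\neg\alpha,\Gamma\Rightarrow\Delta$; $(D_K)$: from $\alpha_1,\dots,\alpha_n\Rightarrow\beta$ ($n\ge0$) infer $\Sigma,D_{G_1}\alpha_1,\dots,D_{G_n}\alpha_n\Rightarrow D_G\beta,\Omega$ where all $G_i\subseteq G$, $\Sigma$ consists only of propositional variables, $\bot$, and $D_H\gamma$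 with $H\not\subseteq G$, and $\Omega$ only of propositional variables, $\bot$, outmost-boxed formulas. $\mathsf{G}(\mathbf{KD}_D)$ adds $(D_D)$: from $\Gamma\Rightarrow$ with $\Gamma\neq\emptyset$ infer $\Sigma,D_{\{a\}}\Gamma\Rightarrow\Omega$ ($D_{\{a\}}\Gamma=\{D_{\{a\}}\gamma:\gamma\in\Gamma\}$), $\Sigma$ only propositional variables, $\bot$, $D_H\gamma$ with $H\neq\{a\}$; $\Omega$ only propositional variables, $\bot$, outmost-boxed formulas. $\mathsf{G}(\mathbf{KT}_D)$ adds to $\mathsf{G}(\mathbf{K}_D)$ $(D_T)$: from $D_G\alpha,\alpha,\Gamma\Rightarrow\Delta$ infer $D_G\alpha,\Gamma\Rightarrow\Delta$. *)

From mathcomp Require Import all_boot.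
From Stdlib Require List Permutation.
Set Implicit Arguments. Unset Strict Implicit. Unset Printing Implicit Defensive.

Section Logic.
Variable Agt : finType.

Record grp := Grp { gset : {set Agt}; gset_ne : gset != set0 }.

Inductive form : Type :=
| Var of nat
| Bot
| And of form & form
| Or of form & form
| Imp of form & form
| Neg of form
| Dbox of grp & form.

Fixpoint peval (v : form -> bool) (f : form) : bool :=
  match f with
  | Var p => v (Var p)
  | Bot => false
  | And a b => peval v a && peval v b
  | Or a b => peval v a || peval v b
  | Imp a b => peval v a ==> peval v b
  | Neg a => ~~ peval v a
  | Dbox G a => v (Dbox G a)
  end.

Definition taut_inst (f : form) : Prop := forall v, peval v f.

Inductive logic := LK | LKD | LKT.

Inductive hderiv (L : logic) : form -> Prop :=
| H_taut A : taut_inst A -> hderiv L A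
| H_K G a b : hderiv L (Imp (Dbox G (Imp a b)) (Imp (Dbox G a) (Dbox G b)))
| H_mono G H a : gset G \subset gset H -> hderiv L (Imp (Dbox G a) (Dbox H a))
| H_MP a b : hderiv L (Imp a b) -> hderiv L a -> hderiv L b
| H_Nec G a : hderiv L a -> hderiv L (Dbox G a)
| H_D (G : grp) (x : Agt) : L = LKD -> gset G = [set x] -> hderiv L (Neg (Dbox G Bot))
| H_T G a : L = LKT -> hderiv L (Imp (Dbox G a) a).

Definition omega_ok (f : form) : Prop :=
  match f with Var _ | Bot | Dbox _ _ => True | _ => False end.

Definition sigmaK_ok (G : grp) (f : form) : Prop :=
  match f with
  | Var _ | Bot => True
  | Dbox H _ => ~ (gset H \subset gset G)
  | _ => False
  end.

Definition sigmaD_ok (x : Agt) (f : form) : Prop :=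
  match f with
  | Var _ | Bot => True
  | Dbox H _ => gset H <> [set x]
  | _ => False
  end.

(* Sequent calculi G(K_D), G(KD_D), G(KT_D). Sequents are pairs of lists
   read as multisets: derivability is closed under permutation of either side. *)
Inductive gderiv (L : logic) : list form -> list form -> Prop :=
| G_perm Gm Dl Gm' Dl' : gderiv L Gm Dl ->
    Permutation.Permutation Gm Gm' -> Permutation.Permutation Dl Dl' -> gderiv L Gm' Dl'
| G_id p Gm Dl : gderiv L (Var p :: Gm) (Var p :: Dl)
| G_bot Gm Dl : gderiv L (Bot :: Gm) Dl
| G_Rand a1 a2 Gm Dl : gderiv L Gm (a1 :: Dl) -> gderiv L Gm (a2 :: Dl) ->
    gderiv L Gm (And a1 a2 :: Dl)
| G_Land a1 a2 Gm Dl : gderiv L (a1 :: a2 :: Gm) Dl -> gderiv L (And a1 a2 :: Gm) Dl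
| G_Ror a1 a2 Gm Dl : gderiv L Gm (a1 :: a2 :: Dl) -> gderiv L Gm (Or a1 a2 :: Dl)
| G_Lor a1 a2 Gm Dl : gderiv L (a1 :: Gm) Dl -> gderiv L (a2 :: Gm) Dl ->
    gderiv L (Or a1 a2 :: Gm) Dl
| G_Rimp a1 a2 Gm Dl : gderiv L (a1 :: Gm) (a2 :: Dl) -> gderiv L Gm (Imp a1 a2 :: Dl)
| G_Limp a1 a2 Gm Dl : gderiv L Gm (a1 :: Dl) -> gderiv L (a2 :: Gm) Dl ->
    gderiv L (Imp a1 a2 :: Gm) Dl
| G_Rneg a Gm Dl : gderiv L (a :: Gm) Dl -> gderiv L Gm (Neg a :: Dl)
| G_Lneg a Gm Dl : gderiv L Gm (a :: Dl) -> gderiv L (Neg a :: Gm) Dl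
| G_DK (ps : list (grp * form)) (b : form) (G : grp) (Sg Om : list form) :
    List.Forall (fun p => gset p.1 \subset gset G) ps ->
    List.Forall (sigmaK_ok G) Sg ->
    List.Forall omega_ok Om ->
    gderiv L (List.map snd ps) (b :: nil) ->
    gderiv L (Sg ++ List.map (fun p => Dbox p.1 p.2) ps) (Dbox G b :: Om)
| G_DD (x : Agt) (Ga : grp) (Gm Sg Om : list form) :
    L = LKD -> gset Ga = [set x] -> Gm <> nil ->
    List.Forall (sigmaD_ok x) Sg ->
    List.Forall omega_ok Om ->
    gderiv L Gm nil ->
    gderiv L (Sg ++ List.map (Dbox Ga) Gm) Om
| G_DT G a Gm Dl : L = LKT ->
    gderiv L (Dbox G a :: a :: Gm) Dl -> gderiv L (Dbox G a :: Gm) Dl.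

End Logic.

From mathcomp Require Import all_boot zify.
From Stdlib Require Import Permutation Classical ClassicalEpsilon.
Set Implicit Arguments. Unset Strict Implicit. Unset Printing Implicit Defensive.

(* Soundness: reading [Γ ⇒ Δ] as [⋀Γ → ⋁Δ], every rule of G(L) becomes a
   Hilbert derivation; the modal rules need necessitation, K and monotonicity,
   plus the D resp. T axiom.  Completeness goes through semantics: Hilbert
   theorems hold in finite trees whose edges carry sets of agents, D_G looking
   along the edges whose set contains G (in KD every agent sees some successor,
   in KT every node sees itself).  An underivable sequent has such a tree as
   countermodel, by induction on its modal depth and then on the size of what
   is left to process: a compound formula is replaced by an underivable premise
   of its rule, in KT the boxes on the left are unfolded by (D_T), and finally
   the root gets one child per box on the right, and in KD one per agent, each a
   relabelled countermodel of the underivable premise of (D_K) resp. (D_D),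
   which has smaller modal depth. *)

Lemma Permutation_all (T : Type) (p : pred T) (s s' : list T) :
  Permutation s s' -> all p s = all p s'.
Proof. by elim=> //= [x m m' _ -> | x y m | m m' m'' _ -> _ ->] //; rewrite andbCA. Qed.

Lemma Permutation_has (T : Type) (p : pred T) (s s' : list T) :
  Permutation s s' -> has p s = has p s'.
Proof. by elim=> //= [x m m' _ -> | x y m | m m' m'' _ -> _ ->] //; rewrite orbCA. Qed.

Lemma Permutation_sumn_map (T : Type) (w : T -> nat) (s s' : list T) :
  Permutation s s' -> sumn (map w s) = sumn (map w s').
Proof. by elim=> //= [x m m' _ -> | x y m | m m' m'' _ -> _ ->] //; rewrite addnCA. Qed.

Lemma leq_sumn_map (T : Type) (w1 w2 : T -> nat) (s : list T) :
  (forall x, List.In x s -> w1 x <= w2 x) -> sumn (map w1 s) <= sumn (map w2 s).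
Proof.
elim: s => //= x s IH h.
by apply: leq_add; [apply: h; left | apply: IH => y hy; apply: h; right].
Qed.

Lemma In_leq_sumn_map (T : Type) (w : T -> nat) (x : T) (s : list T) :
  List.In x s -> w x <= sumn (map w s).
Proof. by elim: s => //= y s IH [<-|/IH]; lia. Qed.

Lemma Permutation_in_front (T : Type) (x : T) (s : list T) :
  List.In x s -> exists s', Permutation s (x :: s').
Proof.
move=> hx; have [s1 [s2 ->]] := List.in_split _ _ hx; exists (s1 ++ s2).
exact/Permutation_sym/Permutation_middle.
Qed.

Lemma In_mem (T : eqType) (x : T) (s : seq T) : x \in s -> List.In x s.
Proof. by elim: s => //= y s IH; rewrite in_cons => /orP [/eqP ->|/IH]; [left | right]. Qed.

Lemma list_choice (X Y : Type) (P : X -> Y -> Prop) (Q : Y -> Prop) (s : list X) :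
  (forall x, List.In x s -> exists2 y, Q y & P x y) ->
  exists ys, (forall x, List.In x s -> exists2 y, List.In y ys & P x y) /\
             (forall y, List.In y ys -> Q y).
Proof.
elim: s => [|x s IH] h; first by exists nil.
have [y Qy Pxy] := h x (or_introl erefl).
have [|ys [h1 h2]] := IH; first by move=> x' hx'; apply: h; right.
exists (y :: ys); split => [x' [<-|/h1 [y' hy' Py']] | y' [<-|/h2]] //.
- by exists y => //; left.
- by exists y' => //; right.
Qed.

Section SequentToHilbert.
Variables (Agt : finType) (L : logic).
Implicit Types (a b c : form Agt) (Gm Dl : list (form Agt)).

Fixpoint conj_list Gm : form Agt :=
  if Gm is a :: Gm' then And a (conj_list Gm') else Neg (Bot Agt).

Fixpoint disj_list Dl : form Agt :=
  if Dl is a :: Dl' then Or a (disj_list Dl') else Bot Agt.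

Lemma peval_conj_list v Gm : peval v (conj_list Gm) = all (peval v) Gm.
Proof. by elim: Gm => //= a Gm ->. Qed.

Lemma peval_disj_list v Dl : peval v (disj_list Dl) = has (peval v) Dl.
Proof. by elim: Dl => //= a Dl ->. Qed.

Ltac tautology :=
  apply: H_taut; let v := fresh "v" in move=> v;
  rewrite /= ?peval_conj_list ?peval_disj_list ?all_cat ?has_cat /=;
  repeat match goal with
  | |- context [peval v ?f] => case: (peval v f)
  | |- context [all (peval v) ?s] => case: (all (peval v) s)
  | |- context [has (peval v) ?s] => case: (has (peval v) s)
  | |- context [v ?f] => case: (v f)
  end.

Lemma hderiv_box_conj G (ps : list (grp Agt * form Agt)) c :
  List.Forall (fun p => gset p.1 \subset gset G) ps ->
  hderiv L (Imp (conj_list (List.map snd ps)) c) ->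
  hderiv L (Imp (conj_list (List.map (fun p => Dbox p.1 p.2) ps)) (Dbox G c)).
Proof.
elim: ps c => [|[H a] ps IH] c /= hps hc.
  have {}hc : hderiv L c by apply: (H_MP _ hc); tautology.
  by apply: (H_MP _ (H_Nec G hc)); tautology.
case/List.Forall_cons_iff: hps => /= sHG hps.
have hac : hderiv L (Imp (conj_list (List.map snd ps)) (Imp a c)).
  by apply: (H_MP _ hc); tautology.
apply: (H_MP _ (H_mono L a sHG)); apply: (H_MP _ (H_K L G a c)).
by apply: (H_MP _ (IH _ hps hac)); tautology.
Qed.

Lemma gderiv_hderiv Gm Dl : gderiv L Gm Dl -> hderiv L (Imp (conj_list Gm) (disj_list Dl)).
Proof.
elim=> {Gm Dl}.
- move=> Gm Dl Gm' Dl' _ IH pG pD; apply: (H_MP _ IH); apply: H_taut => v /=.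
  rewrite !peval_conj_list !peval_disj_list.
  by rewrite (Permutation_all _ pG) (Permutation_has _ pD) implybb.
- by move=> *; tautology.
- by move=> *; tautology.
- by move=> ? ? ? ? _ IH1 _ IH2; apply: (H_MP _ IH2); apply: (H_MP _ IH1); tautology.
- by move=> ? ? ? ? _ IH; apply: (H_MP _ IH); tautology.
- by move=> ? ? ? ? _ IH; apply: (H_MP _ IH); tautology.
- by move=> ? ? ? ? _ IH1 _ IH2; apply: (H_MP _ IH2); apply: (H_MP _ IH1); tautology.
- by move=> ? ? ? ? _ IH; apply: (H_MP _ IH); tautology.
- by move=> ? ? ? ? _ IH1 _ IH2; apply: (H_MP _ IH2); apply: (H_MP _ IH1); tautology.
- by move=> ? ? ? _ IH; apply: (H_MP _ IH); tautology.
- by move=> ? ? ? _ IH; apply: (H_MP _ IH); tautology.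
- move=> ps b G Sg Om hps _ _ _ IH.
  have hb : hderiv L (Imp (conj_list (List.map snd ps)) b) by apply: (H_MP _ IH); tautology.
  by apply: (H_MP _ (hderiv_box_conj hps hb)); tautology.
- move=> x Ga Gm Sg Om HL HGa _ _ _ _ IH.
  pose ps := List.map (pair Ga) Gm.
  have hps : List.Forall (fun p => gset p.1 \subset gset Ga) ps.
    by apply/List.Forall_forall => p /List.in_map_iff [a [<- _]].
  have := hderiv_box_conj hps; rewrite !List.map_map List.map_id /= => /(_ _ IH) hGa.
  by apply: (H_MP _ (H_D HL HGa)); apply: (H_MP _ hGa); tautology.
- by move=> G a ? ? HL _ IH; apply: (H_MP _ (H_T G a HL)); apply: (H_MP _ IH); tautology.
Qed.

End SequentToHilbert.

Section TreeSemantics.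
Variables (Agt : finType) (L : logic).

(* In [Node val refl label children], [label] is the set of agents of the edge
   from the parent and [refl] that of the loop at the node: a group [G] reaches
   a successor when [G] is included in the set of that edge. *)
Inductive tree :=
  Node of (nat -> bool) & {set Agt} & {set Agt} & list tree.

Definition tval t := let: Node v _ _ _ := t in v.
Definition trefl t := let: Node _ r _ _ := t in r.
Definition tlabel t := let: Node _ _ l _ := t in l.
Definition tchildren t := let: Node _ _ _ c := t in c.

Fixpoint sat (f : form Agt) (t : tree) {struct f} : bool :=
  match f with
  | Var p => tval t p
  | Bot => false
  | And a b => sat a t && sat b t
  | Or a b => sat a t || sat b t
  | Imp a b => sat a t ==> sat b t
  | Neg a => ~~ sat a t
  | Dbox G a => ((gset G \subset trefl t) ==> sat a t) &&
      List.forallb (fun c => (gset G \subset tlabel c) ==> sat a c) (tchildren t)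
  end.

Definition frame_cond (refl : {set Agt}) (children : list tree) : Prop :=
  match L with
  | LK => True
  | LKD => forall x, x \in refl \/ exists2 c, List.In c children & x \in tlabel c
  | LKT => refl = setT
  end.

Inductive wf : tree -> Prop :=
  WfNode v refl lab ch :
    frame_cond refl ch -> (forall c, List.In c ch -> wf c) -> wf (Node v refl lab ch).

Lemma wf_child t c : wf t -> List.In c (tchildren t) -> wf c.
Proof. by case=> v refl lab ch _ hch /hch. Qed.

Lemma sat_DboxP G a t :
  reflect ((gset G \subset trefl t -> sat a t) /\
           (forall c, List.In c (tchildren t) -> gset G \subset tlabel c -> sat a c))
          (sat (Dbox G a) t).
Proof.
apply: (iffP andP) => [[/implyP h1 /List.forallb_forall h2] | [h1 h2]].
  by split=> // c hc; apply/implyP/h2.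
by split; [apply/implyP | apply/List.forallb_forall => c hc; apply/implyP/h2].
Qed.

Lemma sat_Imp a b t : sat (Imp a b) t = sat a t ==> sat b t.
Proof. by []. Qed.

Lemma sat_Neg a t : sat (Neg a) t = ~~ sat a t.
Proof. by []. Qed.

Lemma peval_sat t f : peval (sat^~ t) f = sat f t.
Proof. by elim: f => //= [a -> b -> | a -> b -> | a -> b -> | a ->]. Qed.

Lemma hderiv_sat A : hderiv L A -> forall t, wf t -> sat A t.
Proof.
elim=> {A}.
- by move=> A hA t _; rewrite -peval_sat.
- move=> G a b t _; rewrite !sat_Imp.
  apply/implyP => /sat_DboxP [hab hab']; apply/implyP => /sat_DboxP [ha ha'].
  apply/sat_DboxP; split=> [hs | c hc hs].
    by move: (hab hs); rewrite sat_Imp => /implyP; apply; apply: ha.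
  by move: (hab' c hc hs); rewrite sat_Imp => /implyP; apply; apply: ha'.
- move=> G H a sGH t _; rewrite sat_Imp; apply/implyP => /sat_DboxP [ha ha'].
  apply/sat_DboxP; split=> [hs | c hc hs]; first exact/ha/(subset_trans sGH).
  exact/(ha' c hc)/(subset_trans sGH).
- by move=> a b _ IHab _ IHa t wt; move: (IHab t wt); rewrite sat_Imp => /implyP; apply; apply: IHa.
- move=> G a _ IHa t wt; apply/sat_DboxP; split=> [_ | c hc _]; first exact: IHa.
  exact/IHa/(wf_child wt).
- move=> G x HL HG t [v refl lab ch]; rewrite /frame_cond HL => /(_ x) hx _.
  rewrite sat_Neg; apply/negP => /sat_DboxP [hroot hch]; rewrite HG in hroot hch.
  case: hx => [hx | [c hc hxc]].
    by have := hroot; rewrite sub1set hx => /(_ isT).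
  by have := hch c hc; rewrite sub1set hxc => /(_ isT).
- move=> G a HL t [v refl lab ch]; rewrite /frame_cond HL => -> _.
  by rewrite sat_Imp; apply/implyP => /sat_DboxP [+ _]; apply; rewrite subsetT.
Qed.

Definition relabel t S := Node (tval t) (trefl t) S (tchildren t).

Lemma sat_relabel f t S : sat f (relabel t S) = sat f t.
Proof. by elim: f => //= [a -> b -> | a -> b -> | a -> b -> | a -> | G a ->]. Qed.

Lemma wf_relabel t S : wf t -> wf (relabel t S).
Proof. by case=> v r lb ch hc hch; constructor. Qed.

Definition leaf S := Node (fun _ => false) setT S nil.

Lemma wf_leaf S : wf (leaf S).
Proof. by constructor=> //; rewrite /frame_cond; case: L => // x; left; rewrite inE. Qed.

End TreeSemantics.

Section Syntax.
Variable Agt : finType.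
Implicit Types (f g : form Agt) (l : list (form Agt)).

Definition compound f : bool :=
  match f with And _ _ | Or _ _ | Imp _ _ | Neg _ => true | _ => false end.

Definition noncompound l := forall f, List.In f l -> ~~ compound f.

Definition is_box f : bool := if f is Dbox _ _ then true else false.

Fixpoint fsize f : nat :=
  match f with
  | Var _ | Bot => 1
  | And a b | Or a b | Imp a b => (fsize a + fsize b).+1
  | Neg a | Dbox _ a => (fsize a).+1
  end.

Fixpoint mdepth f : nat :=
  match f with
  | Var _ | Bot => 0
  | And a b | Or a b | Imp a b => maxn (mdepth a) (mdepth b)
  | Neg a => mdepth a
  | Dbox _ a => (mdepth a).+1
  end.

Definition mdepth_le n l := forall f, List.In f l -> mdepth f <= n.

Lemma mdepth_le_cat n l1 l2 : mdepth_le n l1 -> mdepth_le n l2 -> mdepth_le n (l1 ++ l2).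
Proof. by move=> h1 h2 f /List.in_app_iff [/h1 | /h2]. Qed.

Lemma mdepth_le_perm n l l' : Permutation l l' -> mdepth_le n l -> mdepth_le n l'.
Proof. by move=> p h f /(Permutation_in _ (Permutation_sym p)) /h. Qed.

Lemma omega_ok_noncompound f : ~~ compound f -> omega_ok f.
Proof. by case: f. Qed.

Lemma gset_sub0 (H : grp Agt) : ~ gset H \subset set0.
Proof. by case: H => S /= hS; rewrite subset0; apply/negP. Qed.

Lemma gset_sub1 (H : grp Agt) x : gset H \subset [set x] -> gset H = [set x].
Proof. by case: H => S /= hS; rewrite subset1 => /orP [/eqP // | /eqP e]; rewrite e eqxx in hS. Qed.

Lemma grp_inj (H H' : grp Agt) : gset H = gset H' -> H = H'.
Proof.
case: H H' => S hS [S' hS'] /= e; subst S'.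
by rewrite (eq_irrelevance hS hS').
Qed.

Lemma set1_neq0 (x : Agt) : [set x] != set0.
Proof. by apply/set0Pn; exists x; rewrite inE. Qed.

Definition agent_grp (x : Agt) : grp Agt := Grp (set1_neq0 x).

End Syntax.

Section AdmissibleRules.
Variables (Agt : finType) (L : logic).
Implicit Types (f g : form Agt) (l D : list (form Agt)) (P : pred {set Agt}).

Lemma gderiv_Bot_in l D : List.In (Bot Agt) l -> gderiv L l D.
Proof.
move=> h; case: (Permutation_in_front h) => l0 p.
exact: G_perm (G_bot L l0 D) (Permutation_sym p) (Permutation_refl D).
Qed.

Lemma gderiv_Var_in p l D : List.In (Var Agt p) l -> List.In (Var Agt p) D -> gderiv L l D.
Proof.
move=> hl hD; case: (Permutation_in_front hl) => l0 pl; case: (Permutation_in_front hD) => D0 pD.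
exact: G_perm (G_id L p l0 D0) (Permutation_sym pl) (Permutation_sym pD).
Qed.

Lemma gderiv_DT_in G a l D : L = LKT -> List.In (Dbox G a) l ->
  gderiv L (a :: l) D -> gderiv L l D.
Proof.
move=> HL hG hd; case: (Permutation_in_front hG) => l0 p.
have hd' : gderiv L (Dbox G a :: a :: l0) D.
  apply: G_perm hd _ (Permutation_refl D).
  exact: perm_trans (perm_skip a p) (perm_swap _ _ _).
exact: G_perm (G_DT HL hd') (Permutation_sym p) (Permutation_refl D).
Qed.

Fixpoint sel_boxes P l : list (grp Agt * form Agt) :=
  if l is f :: l' then
    if f is Dbox H a then
      if P (gset H) then (H, a) :: sel_boxes P l' else sel_boxes P l'
    else sel_boxes P l'
  else nil.

Definition selected P f : bool := if f is Dbox H _ then P (gset H) else false.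

Definition box_of (p : grp Agt * form Agt) : form Agt := Dbox p.1 p.2.

Lemma In_sel_boxes P l H a :
  List.In (H, a) (sel_boxes P l) <-> List.In (Dbox H a) l /\ P (gset H).
Proof.
elim: l => [|f l IH]; first by split=> [|[]].
case: f => [p||b c|b c|b c|b|H' b] /=; rewrite ?IH;
  try by split=> [[h hP]|[[e|h] hP]] //; split=> //; right.
case hP': (P (gset H')) => /=; rewrite IH; split.
- by case=> [[<- <-]|[h hP]]; split=> //; [left | right].
- by case=> [[[<- <-]|h] hP]; [left | right].
- by case=> h hP; split=> //; right.
- by case=> [[[<- _]|h] hP] //; rewrite hP in hP'.
Qed.

Lemma sel_boxes_perm P l :
  Permutation l (List.filter (fun f => ~~ selected P f) l ++ List.map box_of (sel_boxes P l)).
Proof.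
elim: l => //= f l IH; case: f => [p||b c|b c|b c|b|H a] /=; try exact: perm_skip.
case: (P (gset H)) => /=; last exact: perm_skip.
exact: perm_trans (perm_skip _ IH) (Permutation_middle _ _ _).
Qed.

Lemma mdepth_le_sel_boxes n P l :
  mdepth_le n.+1 l -> mdepth_le n (List.map snd (sel_boxes P l)).
Proof.
move=> ml a /List.in_map_iff [[H a'] [/= <- /In_sel_boxes [h _]]].
by have := ml _ h.
Qed.

Lemma gderiv_DK_in l D H b :
  noncompound l -> noncompound D -> List.In (Dbox H b) D ->
  gderiv L (List.map snd (sel_boxes (fun S => S \subset gset H) l)) [:: b] ->
  gderiv L l D.
Proof.
move=> nl nD hb hd; case: (Permutation_in_front hb) => D0 pD.
have sub : List.Forall (fun p => gset p.1 \subset gset H) (sel_boxes (fun S => S \subset gset H) l).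
  by apply/List.Forall_forall => -[H' a] /In_sel_boxes [].
have sigma : List.Forall (sigmaK_ok H)
    (List.filter (fun f => ~~ selected (fun S => S \subset gset H) f) l).
  apply/List.Forall_forall => f /List.filter_In [/nl].
  by case: f => //= H' a _ /negP.
have omega : List.Forall (@omega_ok Agt) D0.
  apply/List.Forall_forall => f hf; apply/omega_ok_noncompound/nD.
  exact: Permutation_in (Permutation_sym pD) (or_intror hf).
exact: G_perm (G_DK sub sigma omega hd) (Permutation_sym (sel_boxes_perm _ l)) (Permutation_sym pD).
Qed.

Lemma gderiv_DD_in x l D : L = LKD -> noncompound l -> noncompound D ->
  sel_boxes (fun S => S == [set x]) l <> nil ->
  gderiv L (List.map snd (sel_boxes (fun S => S == [set x]) l)) nil -> gderiv L l D.
Proof.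
move=> HL nl nD hne hd.
set bs := sel_boxes _ l in hne hd.
have ne : List.map snd bs <> nil by case: (bs) hne.
have sigma : List.Forall (sigmaD_ok x)
    (List.filter (fun f => ~~ selected (fun S => S == [set x]) f) l).
  apply/List.Forall_forall => f /List.filter_In [/nl].
  by case: f => //= H a _ /negP hH e; apply: hH; rewrite e.
have omega : List.Forall (@omega_ok Agt) D.
  by apply/List.Forall_forall => f /nD /omega_ok_noncompound.
have boxes : List.map (Dbox (agent_grp x)) (List.map snd bs) = List.map box_of bs.
  rewrite List.map_map; apply: List.map_ext_in => -[H a] /In_sel_boxes [_ /eqP e] /=.
  by congr Dbox; apply: grp_inj; rewrite e.
have := G_DD HL (erefl : gset (agent_grp x) = [set x]) ne sigma omega hd.
by rewrite boxes => /G_perm; apply; [apply: Permutation_sym; apply: sel_boxes_perm | ].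
Qed.

End AdmissibleRules.

Section Premises.
Variables (Agt : finType) (L : logic).
Implicit Types (f g : form Agt) (G D : list (form Agt)) (t : tree Agt).
Local Notation sequent := (list (form Agt) * list (form Agt))%type.

Definition lpremises f : list sequent :=
  match f with
  | And a b => [:: ([:: a; b], [::])]
  | Or a b => [:: ([:: a], [::]); ([:: b], [::])]
  | Imp a b => [:: ([::], [:: a]); ([:: b], [::])]
  | Neg a => [:: ([::], [:: a])]
  | _ => [::]
  end.

Definition rpremises f : list sequent :=
  match f with
  | And a b => [:: ([::], [:: a]); ([::], [:: b])]
  | Or a b => [:: ([::], [:: a; b])]
  | Imp a b => [:: ([:: a], [:: b])]
  | Neg a => [:: ([:: a], [::])]
  | _ => [::]
  end.

Lemma gderiv_lpremises f G D : compound f ->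
  (forall p, List.In p (lpremises f) -> gderiv L (p.1 ++ G) (p.2 ++ D)) ->
  gderiv L (f :: G) D.
Proof.
case: f => //= [a b|a b|a b|a] _ h.
- exact: G_Land (h _ (or_introl erefl)).
- by apply: G_Lor; [apply: (h ([:: a], [::])) | apply: (h ([:: b], [::]))]; auto.
- by apply: G_Limp; [apply: (h ([::], [:: a])) | apply: (h ([:: b], [::]))]; auto.
- exact: G_Lneg (h _ (or_introl erefl)).
Qed.

Lemma gderiv_rpremises f G D : compound f ->
  (forall p, List.In p (rpremises f) -> gderiv L (p.1 ++ G) (p.2 ++ D)) ->
  gderiv L G (f :: D).
Proof.
case: f => //= [a b|a b|a b|a] _ h.
- by apply: G_Rand; [apply: (h ([::], [:: a])) | apply: (h ([::], [:: b]))]; auto.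
- exact: G_Ror (h _ (or_introl erefl)).
- exact: G_Rimp (h _ (or_introl erefl)).
- exact: G_Rneg (h _ (or_introl erefl)).
Qed.

Lemma sat_lpremise f p t : List.In p (lpremises f) ->
  (forall g, List.In g p.1 -> sat g t) -> (forall g, List.In g p.2 -> ~~ sat g t) ->
  sat f t.
Proof.
case: f => //= [a b|a b|a b|a] hp; repeat case: hp => [<-|hp] //; move=> /= h1 h2.
- rewrite (h1 a) ?(h1 b) //; by [left | right; left].
- rewrite (h1 a) //; by [left | right; left].
- rewrite (h1 b) ?orbT //; by [left | right; left].
- rewrite (negbTE (h2 a _)) //; by [left | right; left].
- rewrite (h1 b) ?implybT //; by [left | right; left].
- rewrite h2 //; by [left | right; left].
Qed.

Lemma sat_rpremise f p t : List.In p (rpremises f) ->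
  (forall g, List.In g p.1 -> sat g t) -> (forall g, List.In g p.2 -> ~~ sat g t) ->
  ~~ sat f t.
Proof.
case: f => //= [a b|a b|a b|a] hp; repeat case: hp => [<-|hp] //; move=> /= h1 h2.
- rewrite (negbTE (h2 a _)) //; by [left | right; left].
- rewrite (negbTE (h2 b _)) ?andbF //; by [left | right; left].
- rewrite (negbTE (h2 a _)) ?(negbTE (h2 b _)) //; by [left | right; left].
- rewrite (h1 a) ?(negbTE (h2 b _)) //; by [left | right; left].
- rewrite negbK (h1 a) //; by [left | right; left].
Qed.

Lemma premise_size f p : List.In p (lpremises f ++ rpremises f) ->
  sumn (map (@fsize _) p.1) + sumn (map (@fsize _) p.2) < fsize f.
Proof.
case: f => //= [a b|a b|a b|a] hp; repeat case: hp => [<-|hp] //=; lia.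
Qed.

Lemma premise_fsize f p g : List.In p (lpremises f ++ rpremises f) ->
  List.In g (p.1 ++ p.2) -> fsize g < fsize f.
Proof.
move=> hp hg; apply: leq_ltn_trans (premise_size hp).
by rewrite -sumn_cat -map_cat; apply: In_leq_sumn_map.
Qed.

Lemma premise_mdepth f p g : List.In p (lpremises f ++ rpremises f) ->
  List.In g (p.1 ++ p.2) -> mdepth g <= mdepth f.
Proof.
case: f => //= [a b|a b|a b|a] hp; repeat case: hp => [<-|hp] //=;
  by move=> hg; repeat case: hg => [<-|hg] //; lia.
Qed.

End Premises.

Section Countermodel.
Variables (Agt : finType) (L : logic).
Local Notation form := (form Agt).
Local Notation tree := (tree Agt).
Local Notation wf := (wf L).
Implicit Types (f g : form) (E G D l : list form) (t : tree).

Definition inb f l : bool := if excluded_middle_informative (List.In f l) then true else false.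

Lemma inbP f l : reflect (List.In f l) (inb f l).
Proof. by rewrite /inb; case: excluded_middle_informative => h; constructor. Qed.

Definition pending_box E f : bool := is_box f && ~~ inb f E.

Definition lweight E f : nat := if compound f || pending_box E f then fsize f else 0.

Definition rweight f : nat := if compound f then fsize f else 0.

Definition weight E G D : nat := sumn (map (lweight E) G) + sumn (map rweight D).

Lemma lweight_le E f : lweight E f <= fsize f.
Proof. by rewrite /lweight; case: ifP. Qed.

Lemma rweight_le f : rweight f <= fsize f.
Proof. by rewrite /rweight; case: ifP. Qed.

Lemma lweight_compound E f : compound f -> lweight E f = fsize f.
Proof. by rewrite /lweight => ->. Qed.

Lemma lweight_pending E f : pending_box E f -> lweight E f = fsize f.
Proof. by rewrite /lweight => ->; rewrite orbT. Qed.

Lemma rweight_compound f : compound f -> rweight f = fsize f.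
Proof. by rewrite /rweight => ->. Qed.

Lemma lweight_cons E g f : lweight (g :: E) f <= lweight E f.
Proof.
rewrite /lweight /pending_box; case: (compound f) => //=; case: (is_box f) => //=.
by case: (inbP f E) => [hf | _]; case: (inbP f (g :: E)) => //= -[]; right.
Qed.

Lemma weight_perm E G D G' D' :
  Permutation G G' -> Permutation D D' -> weight E G D = weight E G' D'.
Proof.
by move=> pG pD; rewrite /weight (Permutation_sumn_map _ pG) (Permutation_sumn_map _ pD).
Qed.

Lemma weight_lpremise E f p G D : compound f -> List.In p (lpremises f) ->
  weight E (p.1 ++ G) (p.2 ++ D) < weight E (f :: G) D.
Proof.
move=> cf hp; have := premise_size (List.in_or_app _ _ _ (or_introl hp)).
have := leq_sumn_map (w1 := lweight E) (w2 := @fsize _) (s := p.1) (fun g _ => lweight_le E g).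
have := leq_sumn_map (w1 := rweight) (w2 := @fsize _) (s := p.2) (fun g _ => rweight_le g).
by rewrite /weight !map_cat !sumn_cat /= lweight_compound //; lia.
Qed.

Lemma weight_rpremise E f p G D : compound f -> List.In p (rpremises f) ->
  weight E (p.1 ++ G) (p.2 ++ D) < weight E G (f :: D).
Proof.
move=> cf hp; have := premise_size (List.in_or_app _ _ _ (or_intror hp)).
have := leq_sumn_map (w1 := lweight E) (w2 := @fsize _) (s := p.1) (fun g _ => lweight_le E g).
have := leq_sumn_map (w1 := rweight) (w2 := @fsize _) (s := p.2) (fun g _ => rweight_le g).
by rewrite /weight !map_cat !sumn_cat /= rweight_compound //; lia.
Qed.

Lemma weight_unfold E G D H a : pending_box E (Dbox H a) ->
  weight (Dbox H a :: E) (a :: G) D < weight E (Dbox H a :: G) D.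
Proof.
move=> ub; have := leq_sumn_map (s := G) (fun f _ => lweight_cons E (Dbox H a) f).
have := lweight_le (Dbox H a :: E) a.
by rewrite /weight /= (lweight_pending ub) /=; lia.
Qed.

Definition all_boxes E := forall f, List.In f E -> is_box f.

(* [E] collects the boxes already unfolded by (D_T).  Their truth at the root is
   only assumed below the size of the formula at hand; it is established where
   the box is unfolded, see [refute_unfold]. *)
Definition sat_upto E t f := forall g, List.In g E -> fsize g <= fsize f -> sat g t.

Definition children_sat E t := forall H a, List.In (Dbox H a) E ->
  forall c, List.In c (tchildren t) -> gset H \subset tlabel c -> sat a c.

Definition refutes_upto E G D t :=
  [/\ wf t, children_sat E t,
      forall f, List.In f G -> sat_upto E t f -> sat f t &
      forall f, List.In f D -> sat_upto E t f -> ~~ sat f t].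

Definition refutable E G D := exists t, refutes_upto E G D t.

Definition completeness_at n w := forall E G D,
  mdepth_le n E -> mdepth_le n G -> mdepth_le n D -> all_boxes E ->
  weight E G D <= w -> ~ gderiv L (G ++ E) D -> refutable E G D.

Lemma sat_upto_le E t f g : sat_upto E t f -> fsize g <= fsize f -> sat_upto E t g.
Proof. by move=> h le g' hg' le'; apply: h => //; apply: leq_trans le. Qed.

Section DecompositionStep.
Variables (n w : nat).
Hypothesis IHw : forall w', w' < w -> completeness_at n w'.

Lemma refute_premise E G D p f :
  List.In p (lpremises f ++ rpremises f) -> mdepth f <= n ->
  mdepth_le n E -> mdepth_le n G -> mdepth_le n D -> all_boxes E ->
  weight E (p.1 ++ G) (p.2 ++ D) < w -> ~ gderiv L (p.1 ++ G ++ E) (p.2 ++ D) ->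
  refutable E (p.1 ++ G) (p.2 ++ D).
Proof.
move=> hp mf mE mG mD bE hw nd.
have mp g : List.In g (p.1 ++ p.2) -> mdepth g <= n.
  by move=> hg; apply: leq_trans (premise_mdepth hp hg) mf.
apply: IHw hw _ _ _ mE _ _ bE (leqnn _) _; rewrite -?catA //.
- by apply: mdepth_le_cat => // g hg; apply/mp/List.in_or_app; left.
- by apply: mdepth_le_cat => // g hg; apply/mp/List.in_or_app; right.
Qed.

Lemma refute_left E G D f : List.In f G -> compound f ->
  mdepth_le n E -> mdepth_le n G -> mdepth_le n D -> all_boxes E ->
  weight E G D <= w -> ~ gderiv L (G ++ E) D -> refutable E G D.
Proof.
move=> hf cf mE mG mD bE hw nd; case: (Permutation_in_front hf) => G0 pG.
have {}mG := mdepth_le_perm pG mG.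
have [p hp np] : exists2 p, List.In p (lpremises f) & ~ gderiv L (p.1 ++ G0 ++ E) (p.2 ++ D).
  apply: NNPP => hne; apply: nd.
  apply: (G_perm _ (Permutation_app_tail E (Permutation_sym pG)) (Permutation_refl D)).
  apply: gderiv_lpremises => // q hq; apply: NNPP => nq; apply: hne; by exists q.
have hpf : List.In p (lpremises f ++ rpremises f) by apply: List.in_or_app; left.
rewrite (weight_perm E pG (Permutation_refl D)) in hw.
have [t [wt cs hG hD]] := refute_premise hpf (mG f (or_introl erefl)) mE
  (fun g hg => mG g (or_intror hg)) mD bE (leq_trans (weight_lpremise E G0 D cf hp) hw) np.
have hs_p h : List.In h (p.1 ++ p.2) -> sat_upto E t f -> sat_upto E t h.
  by move=> hh hs; apply: sat_upto_le hs (ltnW (premise_fsize hpf hh)).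
exists t; split=> // [g /(Permutation_in _ pG) [<- | hg] hs | g hg hs].
- apply: (sat_lpremise hp) => h hh.
  + by apply: hG; [apply: List.in_or_app; left | apply: hs_p hs; apply: List.in_or_app; left].
  + by apply: hD; [apply: List.in_or_app; left | apply: hs_p hs; apply: List.in_or_app; right].
- by apply: hG => //; apply: List.in_or_app; right.
- by apply: hD => //; apply: List.in_or_app; right.
Qed.

Lemma refute_right E G D f : List.In f D -> compound f ->
  mdepth_le n E -> mdepth_le n G -> mdepth_le n D -> all_boxes E ->
  weight E G D <= w -> ~ gderiv L (G ++ E) D -> refutable E G D.
Proof.
move=> hf cf mE mG mD bE hw nd; case: (Permutation_in_front hf) => D0 pD.
have {}mD := mdepth_le_perm pD mD.
have [p hp np] : exists2 p, List.In p (rpremises f) & ~ gderiv L (p.1 ++ G ++ E) (p.2 ++ D0).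
  apply: NNPP => hne; apply: nd.
  apply: (G_perm _ (Permutation_refl _) (Permutation_sym pD)).
  apply: gderiv_rpremises => // q hq; apply: NNPP => nq; apply: hne; by exists q.
have hpf : List.In p (lpremises f ++ rpremises f) by apply: List.in_or_app; right.
rewrite (weight_perm E (Permutation_refl G) pD) in hw.
have [t [wt cs hG hD]] := refute_premise hpf (mD f (or_introl erefl)) mE mG
  (fun g hg => mD g (or_intror hg)) bE (leq_trans (weight_rpremise E G D0 cf hp) hw) np.
have hs_p h : List.In h (p.1 ++ p.2) -> sat_upto E t f -> sat_upto E t h.
  by move=> hh hs; apply: sat_upto_le hs (ltnW (premise_fsize hpf hh)).
exists t; split=> // [g hg hs | g /(Permutation_in _ pD) [<- | hg] hs].
- by apply: hG => //; apply: List.in_or_app; right.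
- apply: (sat_rpremise hp) => h hh.
  + by apply: hG; [apply: List.in_or_app; left | apply: hs_p hs; apply: List.in_or_app; left].
  + by apply: hD; [apply: List.in_or_app; left | apply: hs_p hs; apply: List.in_or_app; right].
- by apply: hD => //; apply: List.in_or_app; right.
Qed.

End DecompositionStep.

Lemma refute_unfold n w E G D f : L = LKT ->
  (forall w', w' < w -> completeness_at n w') -> List.In f G -> pending_box E f ->
  mdepth_le n E -> mdepth_le n G -> mdepth_le n D -> all_boxes E ->
  weight E G D <= w -> ~ gderiv L (G ++ E) D -> refutable E G D.
Proof.
move=> HL IH hf uf mE mG mD bE hw nd; case: (Permutation_in_front hf) => G0 pG.
have {}mG := mdepth_le_perm pG mG.
rewrite (weight_perm E pG (Permutation_refl D)) in hw.
case: f uf hf pG mG hw => // H a uf hf pG mG hw.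
have nd' : ~ gderiv L ((a :: G0) ++ Dbox H a :: E) D.
  move=> hd; apply: nd.
  apply: (G_perm _ (Permutation_app_tail E (Permutation_sym pG)) (Permutation_refl D)).
  apply: (gderiv_DT_in (G := H) (a := a) HL); first by left.
  apply: (G_perm hd _ (Permutation_refl D)); apply: perm_skip.
  exact: Permutation_sym (Permutation_middle _ _ _).
have [t [wt cs hG hD]] : refutable (Dbox H a :: E) (a :: G0) D.
  apply: IH (leq_trans (weight_unfold G0 D uf) hw) _ _ _ _ _ mD _ (leqnn _) nd'.
  - by move=> g [<- | /mE //]; apply: mG; left.
  - move=> g [<- | hg]; last by apply: mG; right.
    by have /ltnW := mG _ (or_introl erefl).
  - by move=> g [<- | /bE].
have hbox : sat_upto E t (Dbox H a) -> sat (Dbox H a) t.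
  move=> hs; apply/sat_DboxP; split=> [_ | c hc hsub].
  - apply: hG; first by left.
    by move=> g [<- /= | hg hsz]; [lia | apply: hs hg _; apply: leq_trans hsz _].
  - exact: cs H a (or_introl erefl) c hc hsub.
have hup g : sat_upto E t g -> sat_upto (Dbox H a :: E) t g.
  move=> hs g' [<- | hg'] hsz; last exact: hs g' hg' hsz.
  exact/hbox/(sat_upto_le hs hsz).
exists t; split=> // [H' a' ha' | g /(Permutation_in _ pG) [<- | hg] hs | g hg hs].
- by apply: cs; right.
- exact: hbox.
- by apply: hG; [right | apply: hup].
- by apply: hD => //; apply: hup.
Qed.

Definition child_ok l t :=
  wf t /\ forall H a, List.In (Dbox H a) l -> gset H \subset tlabel t -> sat a t.

Definition root_of G ch : tree :=
  Node (fun p => inb (Var Agt p) G) (if L is LKT then setT else set0) set0 ch.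

Lemma refutes_root E G D ch :
  noncompound G -> noncompound D -> ~ gderiv L (G ++ E) D ->
  (L = LKT -> forall f, List.In f G -> is_box f -> List.In f E) ->
  (forall c, List.In c ch -> child_ok (G ++ E) c) ->
  (forall H b, List.In (Dbox H b) D ->
     exists2 c, List.In c ch & gset H \subset tlabel c /\ ~~ sat b c) ->
  (L = LKD -> forall x, exists2 c, List.In c ch & x \in tlabel c) ->
  refutes_upto E G D (root_of G ch).
Proof.
move=> nG nD nd hT hch hDch hag.
have hbox H a : List.In (Dbox H a) (G ++ E) -> L <> LKT -> sat (Dbox H a) (root_of G ch).
  move=> ha nT; apply/sat_DboxP; split=> [| c hc hs]; last exact: (proj2 (hch c hc)) _ _ ha hs.
  by rewrite /root_of; case: L nT => //= _ /gset_sub0.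
split.
- constructor; last by move=> c /hch [].
  by rewrite /frame_cond; case HL: L => // x; right; apply: hag.
- by move=> H a ha c hc hs; apply: (proj2 (hch c hc)) _ _ _ hs; apply: List.in_or_app; right.
- move=> f hf hs; have := nG f hf; case: f hf hs => // [p | | H a] hf hs _.
  + exact/inbP.
  + by case: nd; apply: gderiv_Bot_in; apply: List.in_or_app; left.
  + case: (classic (L = LKT)) => [HL | nT]; first exact: hs (hT HL _ hf erefl) (leqnn _).
    by apply: hbox => //; apply: List.in_or_app; left.
- move=> f hf _; have := nD f hf; case: f hf => // [p | H b] hf _.
  + apply/negP => /inbP hp; apply: nd; apply: gderiv_Var_in hf.
    by apply: List.in_or_app; left.
  + have [c hc [hs hb]] := hDch H b hf.
    by apply/negP => /sat_DboxP [_ /(_ c hc hs)]; apply/negP.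
Qed.

Definition refutes G D t :=
  [/\ wf t, forall f, List.In f G -> sat f t & forall f, List.In f D -> ~~ sat f t].

Lemma refutes_of_completeness n G D : (forall w, completeness_at n w) ->
  mdepth_le n G -> mdepth_le n D -> ~ gderiv L G D -> exists t, refutes G D t.
Proof.
move=> IH mG mD nd.
have [t [wt _ hG hD]] : refutable nil G D.
  by apply: (IH (weight nil G D)) => //; rewrite cats0.
by exists t; split=> // f hf; [apply: hG | apply: hD] => // g [].
Qed.

Section ModalStep.
Variable n : nat.
Hypothesis IHn : forall m, m < n -> forall w, completeness_at m w.

Lemma box_child l D H b :
  noncompound l -> noncompound D -> mdepth_le n l -> mdepth (Dbox H b) <= n ->
  List.In (Dbox H b) D -> ~ gderiv L l D ->
  exists2 c, child_ok l c & gset H \subset tlabel c /\ ~~ sat b c.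
Proof.
case: n IHn => // m IH nl nD ml mb hb nd.
set bs := sel_boxes (fun S => S \subset gset H) l.
have [t [wt hbs hb']] : exists t, refutes (List.map snd bs) [:: b] t.
  apply: (refutes_of_completeness (IH m (ltnSn m))) => [|g [<- | []] //|hd].
  - exact: mdepth_le_sel_boxes ml.
  - by apply: nd; apply: gderiv_DK_in hb hd.
exists (relabel t (gset H)); last by rewrite sat_relabel; split=> //; apply: hb'; left.
split=> [|H' a ha hs]; first exact: wf_relabel.
rewrite sat_relabel; apply/hbs/List.in_map_iff.
by exists (H', a); split=> //; apply/In_sel_boxes.
Qed.

Lemma agent_child l D x : L = LKD ->
  noncompound l -> noncompound D -> mdepth_le n l -> ~ gderiv L l D ->
  exists2 c, child_ok l c & x \in tlabel c.
Proof.
move=> HL nl nD ml nd.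
set bs := sel_boxes (fun S => S == [set x]) l.
have hbs H a : List.In (Dbox H a) l -> gset H \subset [set x] -> List.In a (List.map snd bs).
  move=> ha /gset_sub1 e; apply/List.in_map_iff; exists (H, a); split=> //.
  by apply/In_sel_boxes; split=> //; apply/eqP.
case: (classic (bs = nil)) => [bs0 | bsn].
  exists (leaf [set x]); last by rewrite inE.
  by split=> [|H a ha /(hbs H a ha)]; [exact: wf_leaf | rewrite bs0].
have [[H0 a0] /In_sel_boxes [hl0 _]] : exists p, List.In p bs.
  by case: (bs) bsn => [|p ?] //; exists p; left.
case: n IHn ml (ml _ hl0) => // m IH ml _.
have [t [wt hGm _]] : exists t, refutes (List.map snd bs) nil t.
  apply: (refutes_of_completeness (IH m (ltnSn m))) => // [|hd].
  - exact: mdepth_le_sel_boxes ml.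
  - by apply: nd; apply: gderiv_DD_in hd.
exists (relabel t [set x]); last by rewrite /= inE.
split=> [|H a ha hs]; first exact: wf_relabel.
by rewrite sat_relabel; apply/hGm/(hbs H a ha hs).
Qed.

Lemma refute_atomic E G D :
  mdepth_le n E -> mdepth_le n G -> mdepth_le n D -> all_boxes E ->
  noncompound G -> noncompound D -> (L = LKT -> forall f, List.In f G -> is_box f -> List.In f E) ->
  ~ gderiv L (G ++ E) D -> refutable E G D.
Proof.
move=> mE mG mD bE nG nD hT nd.
have nl : noncompound (G ++ E).
  by move=> f /List.in_app_iff [/nG // | /bE]; case: f.
have ml := mdepth_le_cat mG mE.
have [chD [hD1 hD2]] : exists chD,
    (forall p, List.In p (sel_boxes predT D) ->
       exists2 c, List.In c chD & gset p.1 \subset tlabel c /\ ~~ sat p.2 c) /\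
    (forall c, List.In c chD -> child_ok (G ++ E) c).
  apply: list_choice => -[H b] /In_sel_boxes [hb _].
  exact: box_child nl nD ml (mD _ hb) hb nd.
have [chA [hA1 hA2]] : exists chA,
    (L = LKD -> forall x, exists2 c, List.In c chA & x \in tlabel c) /\
    (forall c, List.In c chA -> child_ok (G ++ E) c).
  case: (classic (L = LKD)) => [HL | nKD]; last by exists nil.
  have [cs [h1 h2]] := list_choice (s := enum Agt) (fun x _ => agent_child x HL nl nD ml nd).
  by exists cs; split=> // _ x; apply/h1/In_mem; rewrite mem_enum.
exists (root_of G (chD ++ chA)); apply: refutes_root => //.
- by move=> c /List.in_app_iff [/hD2 | /hA2].
- move=> H b hb; have [|c hc hcb] := hD1 (H, b); first exact/In_sel_boxes.
  by exists c => //; apply: List.in_or_app; left.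
- move=> HL x; have [c hc hx] := hA1 HL x.
  by exists c => //; apply: List.in_or_app; right.
Qed.

End ModalStep.

Lemma completeness n w : completeness_at n w.
Proof.
elim/ltn_ind: n w => n IHn w; elim/ltn_ind: w => w IHw E G D mE mG mD bE hw nd.
case: (classic (exists2 f, List.In f G & compound f)) => [[f hf cf] | nG].
  exact: (refute_left IHw hf cf mE mG mD bE hw nd).
case: (classic (exists2 f, List.In f D & compound f)) => [[f hf cf] | nD].
  exact: (refute_right IHw hf cf mE mG mD bE hw nd).
case: (classic (L = LKT /\ exists2 f, List.In f G & pending_box E f)) => [[HL [f hf uf]] | nT].
  exact: (refute_unfold HL IHw hf uf mE mG mD bE hw nd).
apply: (refute_atomic IHn) => // [f hf | f hf | HL f hf bf].
- by apply/negP => cf; apply: nG; exists f.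
- by apply/negP => cf; apply: nD; exists f.
- apply: NNPP => nfE; apply: nT; split=> //; exists f => //.
  by rewrite /pending_box bf; apply/negP => /inbP.
Qed.

Lemma underivable_refutes G D : ~ gderiv L G D -> exists t, refutes G D t.
Proof.
apply: (refutes_of_completeness (n := sumn (map (@mdepth _) (G ++ D)))) => [w | f hf | f hf].
- exact: completeness.
- by apply: In_leq_sumn_map; apply: List.in_or_app; left.
- by apply: In_leq_sumn_map; apply: List.in_or_app; right.
Qed.

End Countermodel.

Theorem theorem3p14 (Agt : finType) (Agt_ne : 0 < #|Agt|) (L : logic) (A : form Agt) :
  hderiv L A <-> gderiv L nil (A :: nil).
Proof.
split=> [hA | hd].
- apply: NNPP => /underivable_refutes [t [wt _ /(_ A (or_introl erefl))]].
  by rewrite (hderiv_sat hA wt).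
- apply: (H_MP _ (gderiv_hderiv hd)); apply: H_taut => v /=.
  by case: (peval v A).
Qed.
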